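(* Let $j_0<j_f$ and let $\phi^*=(\phi^*_{j_0},\dots,\phi^*_{j_f-1})$ be the slot allocation of an optimal schedule for $\mathcal{D}(\theta_{j_0},\theta_{j_f})$, i.e. $n\phi^*_j$ is the number of bits transmitted in slot $j$ by an admissible schedule achieving $\mathcal{D}(\theta_{j_0},\theta_{j_f})=n\sum_j\phi^*_j$, where bits of each slot are transmitted back-to-back from the earliest available time. For $t\in[\theta_{j_0},\theta_{j_0+1})$ define $$\hat{\mathcal{D}}(t,\theta_{j_f}):=\max\big\{0,\ n\lfloor\phi^*_{j_0}-R_{j_0}(t-\theta_{j_0})\rfloor\big\}+n\sum_{j=j_0+1}^{j_f-1}\phi^*_j.$$ Then $0\le\mathcal{D}(t,\theta_{j_f})-\hat{\mathcal{D}}(t,\theta_{j_f})\le n$.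
   Context: The channel is described by $R$ and $\bar p$, piecewise constant: there is a strictly increasing sequence $\{\theta_j\}_{j\ge0}$ with $R(t)=R_j>0$ and $\bar p(t)=\bar\pi_j\in\mathbb{Z}_{\ge0}$ for $t\in I_j:=(\theta_j,\theta_{j+1}]$; $n\in\mathbb{Z}_{>0}$. A transmission at time $t_k$ of $np_k$ bits ($p_k\in\mathbb{Z}_{\ge0}$) is admissible if $p_k\le\bar p(t_k)$; it is received after $\Delta(t_k,p_k):=p_k/R(t_k)$ time (worst case), and $t_{k+1}\ge t_k+\Delta(t_k,p_k)$, $t_1<t_2<\cdots$. The data capacity $\mathcal{D}(\tau_1,\tau_2)$ is the maximum over all admissible sequences of $n\sum_kp_k$, the sum over $k$ with $t_k\ge\tau_1$ and $t_k+\Delta(t_k,p_k)\le\tau_2$. *)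

From Stdlib Require Import Reals List.
Import ListNotations.
Open Scope R_scope.

(* A transmission: start time t_k, index of the slot I_j = (theta_j, theta_{j+1}]
   containing t_k (uniquely determined by t_k; checked by [tx_admissible]),
   and the integer p_k (n*p_k bits are sent). *)
Record tx : Type := mk_tx { tx_t : R; tx_slot : nat; tx_p : nat }.

Definition in_slot (theta : nat -> R) (t : R) (j : nat) : Prop :=
  theta j < t <= theta (S j).

Definition Delta (Rt : nat -> R) (x : tx) : R := INR (tx_p x) / Rt (tx_slot x).

Definition tx_end (Rt : nat -> R) (x : tx) : R := tx_t x + Delta Rt x.

Definition tx_admissible (theta : nat -> R) (pbar : nat -> nat) (x : tx) : Prop :=
  in_slot theta (tx_t x) (tx_slot x) /\ (tx_p x <= pbar (tx_slot x))%nat.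

Fixpoint ordered (Rt : nat -> R) (s : list tx) : Prop :=
  match s with
  | [] => True
  | x :: s' =>
      match s' with
      | [] => True
      | y :: _ => tx_t x < tx_t y /\ tx_end Rt x <= tx_t y
      end /\ ordered Rt s'
  end.

Definition admissible (theta Rt : nat -> R) (pbar : nat -> nat) (s : list tx) : Prop :=
  Forall (tx_admissible theta pbar) s /\ ordered Rt s.

Definition in_windowb (Rt : nat -> R) (tau1 tau2 : R) (x : tx) : bool :=
  if Rle_dec tau1 (tx_t x) then
    if Rle_dec (tx_end Rt x) tau2 then true else false
  else false.

Definition window (Rt : nat -> R) (tau1 tau2 : R) (s : list tx) : list tx :=
  filter (in_windowb Rt tau1 tau2) s.

Definition bits (s : list tx) : nat :=
  fold_right (fun x a => (tx_p x + a)%nat) 0%nat s.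

Definition is_data_capacity (theta Rt : nat -> R) (pbar : nat -> nat) (n : nat)
  (tau1 tau2 : R) (D : nat) : Prop :=
  (exists s, admissible theta Rt pbar s /\ D = (n * bits (window Rt tau1 tau2 s))%nat) /\
  (forall s, admissible theta Rt pbar s -> (n * bits (window Rt tau1 tau2 s) <= D)%nat).

Definition slot_bits (Rt : nat -> R) (tau1 tau2 : R) (s : list tx) (j : nat) : nat :=
  bits (filter (fun x => Nat.eqb (tx_slot x) j) (window Rt tau1 tau2 s)).

Fixpoint back_to_back (Rt : nat -> R) (w : list tx) : Prop :=
  match w with
  | [] => True
  | x :: w' =>
      match w' with
      | [] => True
      | y :: _ => (tx_slot x = tx_slot y -> tx_t y = tx_end Rt x)
      end /\ back_to_back Rt w'
  end.

Definition sum_range (phi : nat -> nat) (a b : nat) : nat :=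
  fold_right (fun j acc => (phi j + acc)%nat) 0%nat (seq a (b - a)).

Definition optimal_slot_allocation (theta Rt : nat -> R) (pbar : nat -> nat) (n : nat)
  (j0 jf : nat) (phi : nat -> nat) : Prop :=
  exists s,
    admissible theta Rt pbar s /\
    is_data_capacity theta Rt pbar n (theta j0) (theta jf)
      (n * bits (window Rt (theta j0) (theta jf) s))%nat /\
    bits (window Rt (theta j0) (theta jf) s) = sum_range phi j0 jf /\
    (forall j, (j0 <= j < jf)%nat -> phi j = slot_bits Rt (theta j0) (theta jf) s j) /\
    back_to_back Rt (window Rt (theta j0) (theta jf) s).

(* \hat D(t, theta_{jf}); Int_part is the floor function. *)
Definition D_hat (theta Rt : nat -> R) (n j0 jf : nat) (phi : nat -> nat) (t : R) : R :=
  Rmax 0 (INR n * IZR (Int_part (INR (phi j0) - Rt j0 * (t - theta j0))))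
  + INR n * INR (sum_range phi (S j0) jf).

From Pilot Require Import Defs.
From Stdlib Require Import Reals List Sorted Lra Lia ZArith Classical.
Import ListNotations.
Open Scope R_scope.

(* Let s be the optimal schedule for [theta j0, theta jf] and F the floor
   appearing in D_hat.  Lower bound: the slot-j0 transmissions of s end no
   later than the last one, y, and satisfy phi j0 <= R (t_y - theta j0) + p_y;
   hence F bits can be sent after t in slot j0, finishing by the end of y, and
   followed by the transmissions of s in the later slots.  Upper bound: any
   schedule for [t, theta jf] can be preceded by phi j0 - F - 1 one-unit
   transmissions in (theta j0, t), which fit because
   phi j0 - F - 1 < R (t - theta j0); optimality of s caps the total. *)

Lemma Rdiv_le_of_le_mul c a b : 0 < c -> a <= c * b -> a / c <= b.
Proof.
  intros Hc H. apply Rmult_le_reg_l with c; [exact Hc|].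
  replace (c * (a / c)) with a by (field; lra). exact H.
Qed.

Lemma Rdiv_lt_of_lt_mul c a b : 0 < c -> a < c * b -> a / c < b.
Proof.
  intros Hc H. apply Rmult_lt_reg_l with c; [exact Hc|].
  replace (c * (a / c)) with a by (field; lra). exact H.
Qed.

Lemma INR_div_nonneg k c : 0 < c -> 0 <= INR k / c.
Proof.
  intros Hc. unfold Rdiv. apply Rmult_le_pos; [apply pos_INR|].
  apply Rlt_le, Rinv_0_lt_compat, Hc.
Qed.

Lemma INR_Z_to_nat z : (0 <= z)%Z -> INR (Z.to_nat z) = IZR z.
Proof. intros Hz. rewrite INR_IZR_INZ, Z2Nat.id by exact Hz. reflexivity. Qed.

Lemma IZR_le_INR_Z_to_nat z : IZR z <= INR (Z.to_nat z).
Proof.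
  destruct (Z_le_gt_dec 0 z) as [Hz|Hz].
  - rewrite INR_Z_to_nat by exact Hz. lra.
  - replace (Z.to_nat z) with 0%nat by lia. apply IZR_le. lia.
Qed.

Lemma nat_pred_has_max (P : nat -> Prop) B :
  (exists b, P b) -> (forall b, P b -> (b <= B)%nat) ->
  exists b, P b /\ forall b', P b' -> (b' <= b)%nat.
Proof.
  revert P. induction B as [|B IH]; intros P [b Hb] HB.
  - exists b; split; [exact Hb|]. intros b' Hb'.
    pose proof (HB b' Hb'). pose proof (HB b Hb). lia.
  - destruct (classic (P (S B))) as [HSB|HSB].
    + exists (S B). split; [exact HSB | exact HB].
    + apply IH; [exists b; exact Hb|]. intros b' Hb'.
      specialize (HB b' Hb').
      destruct (Nat.eq_dec b' (S B)) as [->|]; [contradiction | lia].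
Qed.

Definition precedes (Rt : nat -> R) (x y : tx) : Prop :=
  tx_t x < tx_t y /\ tx_end Rt x <= tx_t y.

Lemma precedes_trans Rt : Relations_1.Transitive (precedes Rt).
Proof. intros x y z [H1 H2] [H3 H4]; split; lra. Qed.

Lemma ordered_iff_Sorted Rt l : ordered Rt l <-> Sorted (precedes Rt) l.
Proof.
  induction l as [|x [|y l] IH]; simpl.
  - split; constructor.
  - split; intros; repeat constructor.
  - split.
    + intros [Hxy Hl]. constructor; [apply IH, Hl | constructor; exact Hxy].
    + intros Hs. inversion Hs as [|? ? Hl Hhd]; subst.
      inversion Hhd; subst. split; [assumption | apply IH, Hl].
Qed.

Lemma ordered_iff_StronglySorted Rt l :
  ordered Rt l <-> StronglySorted (precedes Rt) l.
Proof.
  rewrite ordered_iff_Sorted. split.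
  - apply Sorted_StronglySorted, precedes_trans.
  - apply StronglySorted_Sorted.
Qed.

Lemma StronglySorted_filter {A} (P : A -> A -> Prop) f l :
  StronglySorted P l -> StronglySorted P (filter f l).
Proof.
  induction l as [|x l IH]; simpl; intros Hl; [constructor|].
  apply StronglySorted_inv in Hl as [Hl Hx].
  destruct (f x); [constructor|]; auto.
  apply Forall_forall. intros y Hy. apply filter_In in Hy as [Hy _].
  exact (proj1 (Forall_forall _ _) Hx y Hy).
Qed.

Lemma StronglySorted_app {A} (P : A -> A -> Prop) l1 l2 :
  StronglySorted P l1 -> StronglySorted P l2 ->
  (forall x y, In x l1 -> In y l2 -> P x y) -> StronglySorted P (l1 ++ l2).
Proof.
  induction l1 as [|x l1 IH]; simpl; intros H1 H2 H12; [exact H2|].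
  apply StronglySorted_inv in H1 as [H1 Hx]. constructor.
  - apply IH; auto.
  - apply Forall_app; split; [exact Hx|].
    apply Forall_forall. intros y Hy. apply H12; auto.
Qed.

Lemma StronglySorted_precedes Rt l x y :
  StronglySorted (precedes Rt) l -> In x l -> In y l ->
  tx_t x < tx_t y -> precedes Rt x y.
Proof.
  induction l as [|a l IH]; simpl; intros Hl Hx Hy Hxy; [contradiction|].
  apply StronglySorted_inv in Hl as [Hl Ha]. rewrite Forall_forall in Ha.
  destruct Hx as [<-|Hx], Hy as [<-|Hy].
  - lra.
  - apply Ha, Hy.
  - destruct (Ha x Hx). lra.
  - apply IH; assumption.
Qed.

Lemma admissible_filter theta Rt pbar f s :
  admissible theta Rt pbar s -> admissible theta Rt pbar (filter f s).
Proof.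
  intros [Hadm Hord]. split.
  - apply Forall_forall. intros x Hx. apply filter_In in Hx as [Hx _].
    exact (proj1 (Forall_forall _ _) Hadm x Hx).
  - apply ordered_iff_StronglySorted, StronglySorted_filter,
      ordered_iff_StronglySorted, Hord.
Qed.

Lemma admissible_app theta Rt pbar l1 l2 :
  admissible theta Rt pbar l1 -> admissible theta Rt pbar l2 ->
  (forall x y, In x l1 -> In y l2 -> precedes Rt x y) ->
  admissible theta Rt pbar (l1 ++ l2).
Proof.
  intros [Ha1 Ho1] [Ha2 Ho2] H12. split.
  - apply Forall_app; split; assumption.
  - apply ordered_iff_StronglySorted, StronglySorted_app;
      [apply ordered_iff_StronglySorted, Ho1 | apply ordered_iff_StronglySorted, Ho2 | exact H12].
Qed.

Lemma bits_app l1 l2 : bits (l1 ++ l2) = (bits l1 + bits l2)%nat.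
Proof. induction l1; simpl; lia. Qed.

Lemma bits_filter_le f l : (bits (filter f l) <= bits l)%nat.
Proof. induction l as [|x l IH]; simpl; [|destruct (f x); simpl]; lia. Qed.

Lemma bits_pos_In l : (0 < bits l)%nat -> exists x, In x l /\ (0 < tx_p x)%nat.
Proof.
  induction l as [|x l IH]; simpl; intros Hl; [lia|].
  destruct (tx_p x) eqn:Hx.
  - destruct (IH ltac:(lia)) as [y [Hy Hpy]]. exists y; auto.
  - exists x; split; [left; reflexivity | lia].
Qed.

Lemma bits_filter_orb f g l : (forall x, andb (f x) (g x) = false) ->
  bits (filter (fun x => orb (f x) (g x)) l) = (bits (filter f l) + bits (filter g l))%nat.
Proof.
  intros Hfg. induction l as [|x l IH]; simpl; [reflexivity|].
  specialize (Hfg x). destruct (f x), (g x); simpl in *; try discriminate; lia.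
Qed.

Lemma in_windowb_iff Rt a b x :
  in_windowb Rt a b x = true <-> a <= tx_t x /\ tx_end Rt x <= b.
Proof.
  unfold in_windowb.
  destruct (Rle_dec a (tx_t x)), (Rle_dec (tx_end Rt x) b); intuition discriminate.
Qed.

Lemma window_id Rt a b l :
  (forall x, In x l -> a <= tx_t x /\ tx_end Rt x <= b) -> window Rt a b l = l.
Proof.
  intros Hl. apply forallb_filter_id, forallb_forall.
  intros x Hx. apply in_windowb_iff, Hl, Hx.
Qed.

Lemma window_bits_antimono Rt a a' b s :
  a <= a' -> (bits (window Rt a' b s) <= bits (window Rt a b s))%nat.
Proof.
  intros Ha. induction s as [|x s IH]; simpl; [lia|].
  destruct (in_windowb Rt a' b x) eqn:Hx'.
  - apply in_windowb_iff in Hx'.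
    assert (Hx : in_windowb Rt a b x = true) by (apply in_windowb_iff; lra).
    rewrite Hx. simpl. lia.
  - destruct (in_windowb Rt a b x); simpl; lia.
Qed.

Lemma sum_range_ext f g a b : (forall j, (a <= j < b)%nat -> f j = g j) ->
  sum_range f a b = sum_range g a b.
Proof.
  unfold sum_range. intros Hfg.
  assert (Hseq : forall j, In j (seq a (b - a)) -> f j = g j).
  { intros j Hj. apply in_seq in Hj. apply Hfg. lia. }
  clear Hfg. revert Hseq. induction (seq a (b - a)) as [|j js IH]; intros Hseq; simpl;
    [reflexivity|].
  rewrite Hseq, IH; [reflexivity | intros i Hi; apply Hseq | ]; simpl; auto.
Qed.

Lemma sum_range_first f a b : (a < b)%nat ->
  sum_range f a b = (f a + sum_range f (S a) b)%nat.
Proof.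
  intros Hab. unfold sum_range. replace (b - a)%nat with (S (b - S a)) by lia.
  reflexivity.
Qed.

Lemma sum_range_slot_bits Rt tau1 tau2 s a b :
  sum_range (slot_bits Rt tau1 tau2 s) a b
  = bits (filter (fun x => andb (Nat.leb a (tx_slot x)) (Nat.ltb (tx_slot x) b))
            (window Rt tau1 tau2 s)).
Proof.
  unfold sum_range, slot_bits. generalize (window Rt tau1 tau2 s) as l. intros l.
  rewrite (filter_ext (fun x => andb (Nat.leb a (tx_slot x)) (Nat.ltb (tx_slot x) b))
             (fun x => andb (Nat.leb a (tx_slot x)) (Nat.ltb (tx_slot x) (a + (b - a))))).
  2:{ intros x. destruct (Nat.leb_spec a (tx_slot x)), (Nat.ltb_spec (tx_slot x) b),
        (Nat.ltb_spec (tx_slot x) (a + (b - a))); simpl; reflexivity || lia. }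
  generalize (b - a)%nat as m. intros m. revert a.
  induction m as [|m IH]; intros a; simpl.
  - induction l as [|x l IHl]; simpl; [reflexivity|].
    destruct (Nat.leb_spec a (tx_slot x)), (Nat.ltb_spec (tx_slot x) (a + 0)); simpl; lia.
  - rewrite IH, <- bits_filter_orb.
    + f_equal. apply filter_ext. intros x.
      destruct (Nat.eqb_spec (tx_slot x) a), (Nat.leb_spec (S a) (tx_slot x)),
        (Nat.ltb_spec (tx_slot x) (S a + m)), (Nat.leb_spec a (tx_slot x)),
        (Nat.ltb_spec (tx_slot x) (a + S m)); simpl; reflexivity || lia.
    + intros x. destruct (Nat.eqb_spec (tx_slot x) a), (Nat.leb_spec (S a) (tx_slot x));
        simpl; reflexivity || lia.
Qed.

Section Schedules.

Variables (theta Rt : nat -> R) (pbar : nat -> nat).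
Hypothesis theta_lt : forall j, theta j < theta (S j).
Hypothesis rate_pos : forall j, 0 < Rt j.

Lemma theta_le i j : (i <= j)%nat -> theta i <= theta j.
Proof. induction 1 as [|j _ IH]; [lra | specialize (theta_lt j); lra]. Qed.

Lemma slot_bits_pos_pbar a b s j : admissible theta Rt pbar s ->
  (0 < slot_bits Rt a b s j)%nat -> (0 < pbar j)%nat.
Proof.
  intros [Hadm _] Hbits. destruct (bits_pos_In _ Hbits) as [x [Hx Hpx]].
  apply filter_In in Hx as [Hx Hxj]. apply Nat.eqb_eq in Hxj.
  apply filter_In in Hx as [Hx _].
  destruct (proj1 (Forall_forall _ _) Hadm x Hx) as [_ Hp]. subst j. lia.
Qed.

Lemma capacity_exists n a b B :
  (forall s, admissible theta Rt pbar s -> (bits (window Rt a b s) <= B)%nat) ->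
  exists D, is_data_capacity theta Rt pbar n a b D.
Proof.
  intros HB.
  destruct (nat_pred_has_max
              (fun k => exists s, admissible theta Rt pbar s /\ k = bits (window Rt a b s)) B)
    as [k [[s [Hs ->]] Hmax]].
  - exists 0%nat, []. split; [split; [constructor | exact I] | reflexivity].
  - intros k [s [Hs ->]]. apply HB, Hs.
  - exists (n * bits (window Rt a b s))%nat. split.
    + exists s. split; [exact Hs | reflexivity].
    + intros s' Hs'. apply Nat.mul_le_mono_l, Hmax. exists s'. split; [exact Hs' | reflexivity].
Qed.

Fixpoint train (j : nat) (a : R) (k : nat) : list tx :=
  match k with
  | O => []
  | S k' => mk_tx a j 1 :: train j (a + 1 / Rt j) k'
  end.

Lemma bits_train j a k : bits (train j a k) = k.
Proof. revert a; induction k as [|k IH]; intros a; simpl; [|rewrite IH]; reflexivity. Qed.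

Lemma In_train j a k u : In u (train j a k) ->
  tx_slot u = j /\ tx_p u = 1%nat /\ a <= tx_t u /\ tx_t u < tx_end Rt u /\
  tx_end Rt u <= a + INR k / Rt j.
Proof.
  pose proof (rate_pos j) as Hr.
  assert (Hstep : 0 < 1 / Rt j) by (apply Rdiv_lt_0_compat; lra).
  revert a; induction k as [|k IH]; intros a; cbn [train In]; [tauto|].
  assert (Hk : INR (S k) / Rt j = 1 / Rt j + INR k / Rt j) by (rewrite S_INR; field; lra).
  pose proof (INR_div_nonneg k _ Hr).
  intros [<-|Hu].
  - rewrite Hk. unfold tx_end, Defs.Delta; cbn [tx_t tx_p tx_slot INR]. repeat split; lra.
  - destruct (IH _ Hu) as (H1 & H2 & H3 & H4 & H5). rewrite Hk. repeat split; auto; lra.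
Qed.

Lemma train_admissible j a k : (0 < pbar j)%nat -> theta j < a ->
  a + INR k / Rt j <= theta (S j) -> admissible theta Rt pbar (train j a k).
Proof.
  intros Hpbar Ha Hend. split.
  - apply Forall_forall. intros u Hu.
    destruct (In_train _ _ _ _ Hu) as (Hj & Hp & H1 & H2 & H3).
    unfold tx_admissible, in_slot. rewrite Hj, Hp.
    pose proof (INR_div_nonneg k _ (rate_pos j)). split; [split; lra | exact Hpbar].
  - clear Ha Hend. revert a. induction k as [|k IH]; intros a; simpl; [exact I|].
    split; [|apply IH]. destruct k; [exact I|].
    pose proof (rate_pos j). unfold tx_end, Defs.Delta; simpl.
    assert (0 < 1 / Rt j) by (apply Rdiv_lt_0_compat; lra). lra.
Qed.

Lemma bits_le_span j x l :
  Forall (fun u => tx_slot u = j) (x :: l) -> Sorted (precedes Rt) (x :: l) ->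
  exists y, In y (x :: l) /\
    INR (bits (x :: l)) <= Rt j * (tx_t y - tx_t x) + INR (tx_p y).
Proof.
  pose proof (rate_pos j) as Hr.
  revert x. induction l as [|x' l IH]; intros x Hslot Hsort.
  - exists x. split; [left; reflexivity|]. simpl. rewrite Rminus_diag, plus_INR. simpl. lra.
  - apply Forall_cons_iff in Hslot as [Hxj Hslot'].
    apply Sorted_inv in Hsort as [Hsort' Hhd].
    apply HdRel_inv in Hhd as [_ Hxx'].
    destruct (IH x' Hslot' Hsort') as [y [Hy Hbits]].
    exists y. split; [right; exact Hy|].
    change (bits (x :: x' :: l)) with (tx_p x + bits (x' :: l))%nat. rewrite plus_INR.
    unfold tx_end, Defs.Delta in Hxx'. rewrite Hxj in Hxx'.
    assert (Hp : INR (tx_p x) <= Rt j * (tx_t x' - tx_t x)).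
    { replace (INR (tx_p x)) with (Rt j * (INR (tx_p x) / Rt j)) by (field; lra).
      apply Rmult_le_compat_l; lra. }
    lra.
Qed.

Lemma refill_slot j y t k :
  tx_admissible theta pbar y -> tx_slot y = j -> in_slot theta t j ->
  (0 < pbar j)%nat -> (0 < k)%nat ->
  INR k <= Rt j * (tx_t y - t) + INR (tx_p y) ->
  exists C, admissible theta Rt pbar C /\ (k <= bits C)%nat /\
    forall u, In u C -> t <= tx_t u /\ tx_end Rt u <= tx_end Rt y /\
      forall z, precedes Rt y z -> precedes Rt u z.
Proof.
  intros Hy Hyj [Ht1 Ht2] Hpbar Hk Hfit.
  pose proof Hy as [[Hy1 Hy2] Hpy]. unfold in_slot in Hy1, Hy2. rewrite Hyj in Hy1, Hy2, Hpy.
  pose proof (rate_pos j) as Hr.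
  assert (Hend_y : tx_end Rt y = tx_t y + INR (tx_p y) / Rt j)
    by (unfold tx_end, Defs.Delta; rewrite Hyj; reflexivity).
  pose proof (INR_div_nonneg (tx_p y) _ Hr).
  (* Either the [k] units fit into one transmission starting at [t], or the
     [k - p_y] missing units are sent one by one right before [y]. *)
  destruct (le_lt_dec k (tx_p y)) as [Hkp|Hkp].
  - set (u := mk_tx t j k).
    assert (Hend_u : tx_end Rt u = t + INR k / Rt j) by reflexivity.
    assert (Hku : 0 < INR k / Rt j) by (apply Rdiv_lt_0_compat; [apply lt_0_INR, Hk | exact Hr]).
    assert (Hu_y : tx_end Rt u <= tx_end Rt y).
    { rewrite Hend_u, Hend_y.
      assert (INR k / Rt j <= tx_t y - t + INR (tx_p y) / Rt j); [|lra].
      apply Rdiv_le_of_le_mul; [exact Hr|].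
      replace (Rt j * (tx_t y - t + INR (tx_p y) / Rt j))
        with (Rt j * (tx_t y - t) + INR (tx_p y)) by (field; lra).
      exact Hfit. }
    exists [u]. split; [|split].
    + split; [|simpl; tauto]. constructor; [|constructor].
      split; [split; simpl; lra | simpl; lia].
    + simpl. lia.
    + intros v [<-|[]]. split; [simpl; lra|]. split; [exact Hu_y|].
      intros z [_ Hyz]. split; simpl in *; lra.
  - set (m := (k - tx_p y)%nat).
    assert (Hm : INR m / Rt j <= tx_t y - t).
    { apply Rdiv_le_of_le_mul; [exact Hr|]. unfold m. rewrite minus_INR by lia. lra. }
    pose proof (INR_div_nonneg m _ Hr).
    set (C := train j (tx_t y - INR m / Rt j) m).
    assert (HC : forall u, In u C ->
              t <= tx_t u /\ tx_t u < tx_t y /\ tx_end Rt u <= tx_t y).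
    { intros u Hu. destruct (In_train _ _ _ _ Hu) as (_ & _ & H1 & H2 & H3).
      repeat split; lra. }
    exists (C ++ [y]). split; [|split].
    + apply admissible_app.
      * apply train_admissible; [exact Hpbar | lra | lra].
      * split; [constructor; [exact Hy | constructor] | simpl; tauto].
      * intros u v Hu [<-|[]]. destruct (HC u Hu) as (_ & H2 & H3). split; lra.
    + rewrite bits_app. unfold C. rewrite bits_train. simpl. unfold m. lia.
    + intros u Hu. apply in_app_or in Hu as [Hu|[<-|[]]].
      * destruct (HC u Hu) as (H1 & H2 & H3).
        split; [lra|]. split; [lra|]. intros v [Hv1 Hv2]. split; lra.
      * split; [lra|]. split; [lra | auto].
Qed.

Lemma slot_bits_le_span a b s j : admissible theta Rt pbar s ->
  (0 < slot_bits Rt a b s j)%nat ->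
  exists y, In y (window Rt a b s) /\ tx_slot y = j /\
    INR (slot_bits Rt a b s j) <= Rt j * (tx_t y - a) + INR (tx_p y).
Proof.
  intros Hadm Hpos. unfold slot_bits in *.
  set (w := window Rt a b s) in *.
  assert (Hsorted : StronglySorted (precedes Rt) (filter (fun u => Nat.eqb (tx_slot u) j) w)).
  { apply StronglySorted_filter, ordered_iff_StronglySorted, (admissible_filter _ _ _ _ _ Hadm). }
  assert (Hin : forall u, In u (filter (fun u => Nat.eqb (tx_slot u) j) w) ->
            In u w /\ tx_slot u = j).
  { intros u Hu. apply filter_In in Hu as [Hu Hj]. split; [exact Hu | apply Nat.eqb_eq, Hj]. }
  destruct (filter (fun u => Nat.eqb (tx_slot u) j) w) as [|x l];
    [simpl in Hpos; lia|].
  destruct (bits_le_span j x l) as [y [Hy Hspan]].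
  - apply Forall_forall. intros u Hu. apply Hin, Hu.
  - apply StronglySorted_Sorted, Hsorted.
  - destruct (Hin y Hy) as [Hyw Hyj]. destruct (Hin x (or_introl eq_refl)) as [Hxw _].
    apply filter_In in Hxw as [_ Hxw]. apply in_windowb_iff in Hxw as [Hax _].
    exists y. split; [exact Hyw|]. split; [exact Hyj|].
    assert (0 <= Rt j * (tx_t x - a)) by (apply Rmult_le_pos; [apply Rlt_le, rate_pos | lra]).
    lra.
Qed.

Lemma prepend_later_slots j0 jf s t C :
  admissible theta Rt pbar s -> t < theta (S j0) -> admissible theta Rt pbar C ->
  (forall u, In u C -> t <= tx_t u /\ tx_end Rt u <= theta jf /\
     forall z, In z (window Rt (theta j0) (theta jf) s) -> theta (S j0) < tx_t z ->
       precedes Rt u z) ->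
  exists s', admissible theta Rt pbar s' /\
    bits (window Rt t (theta jf) s')
    = (bits C + sum_range (slot_bits Rt (theta j0) (theta jf) s) (S j0) jf)%nat.
Proof.
  intros Hadm Ht HC HC_in.
  rewrite sum_range_slot_bits.
  set (rest := filter (fun x => andb (Nat.leb (S j0) (tx_slot x)) (Nat.ltb (tx_slot x) jf))
                 (window Rt (theta j0) (theta jf) s)).
  assert (Hrest_in : forall z, In z rest -> In z (window Rt (theta j0) (theta jf) s) /\
            theta (S j0) < tx_t z /\ tx_end Rt z <= theta jf).
  { intros z Hz. apply filter_In in Hz as [Hz Hslot].
    apply andb_prop in Hslot as [Hslot _]. apply Nat.leb_le in Hslot.
    pose proof Hz as Hzs. apply filter_In in Hzs as [Hzs Hwin]. apply in_windowb_iff in Hwin.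
    destruct (proj1 (Forall_forall _ _) (proj1 Hadm) z Hzs) as [[Hz1 _] _].
    pose proof (theta_le _ _ Hslot). split; [exact Hz | split; lra]. }
  exists (C ++ rest). split.
  - apply admissible_app; [exact HC | apply admissible_filter, admissible_filter, Hadm |].
    intros u z Hu Hz. destruct (Hrest_in z Hz) as (Hzw & Hzt & _). apply (HC_in u Hu); assumption.
  - rewrite window_id, bits_app; [reflexivity|].
    intros u Hu. apply in_app_or in Hu as [Hu|Hu].
    + destruct (HC_in u Hu) as (H1 & H2 & _). split; assumption.
    + destruct (Hrest_in u Hu) as (_ & H1 & H2). split; lra.
Qed.

Definition residual (j p : nat) (t : R) : Z := Int_part (INR p - Rt j * (t - theta j)).

Lemma capacity_lower_witness j0 jf s t :
  (j0 < jf)%nat -> admissible theta Rt pbar s -> theta j0 <= t < theta (S j0) ->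
  exists s', admissible theta Rt pbar s' /\
    (Z.to_nat (residual j0 (slot_bits Rt (theta j0) (theta jf) s j0) t)
     + sum_range (slot_bits Rt (theta j0) (theta jf) s) (S j0) jf
     <= bits (window Rt t (theta jf) s'))%nat.
Proof.
  intros Hj Hadm [Ht1 Ht2].
  (* [in_slot] is open on the left: nothing can start at [theta j0] in slot [j0],
     but then [s] itself is a witness. *)
  destruct (Req_dec t (theta j0)) as [->|Ht0].
  { exists s. split; [exact Hadm|].
    unfold residual. rewrite Rminus_diag, Rmult_0_r, Rminus_0_r, Int_part_INR, Nat2Z.id.
    rewrite <- sum_range_first, sum_range_slot_bits by exact Hj. apply bits_filter_le. }
  set (phi0 := slot_bits Rt (theta j0) (theta jf) s j0).
  destruct (Z.to_nat (residual j0 phi0 t)) as [|k] eqn:Hk.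
  { destruct (prepend_later_slots j0 jf s t []) as [s' [Hs' Hbits]];
      [exact Hadm | exact Ht2 | split; [constructor | exact I] | intros u [] |].
    exists s'. split; [exact Hs' | rewrite Hbits; reflexivity]. }
  assert (Hres : INR (S k) <= INR phi0 - Rt j0 * (t - theta j0)).
  { rewrite <- Hk, INR_Z_to_nat by lia. apply base_Int_part. }
  assert (0 <= Rt j0 * (t - theta j0)) by (apply Rmult_le_pos; [apply Rlt_le, rate_pos | lra]).
  assert (Hphi0 : (0 < phi0)%nat).
  { apply INR_lt. rewrite S_INR in Hres. pose proof (pos_INR k). simpl. lra. }
  destruct (slot_bits_le_span _ _ s j0 Hadm Hphi0) as (y & Hyw & Hyj & Hspan). fold phi0 in Hspan.
  pose proof Hyw as Hys. apply filter_In in Hys as [Hys Hy_win]. apply in_windowb_iff in Hy_win.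
  pose proof (proj1 (Forall_forall _ _) (proj1 Hadm) y Hys) as Hy.
  destruct (refill_slot j0 y t (S k)) as (C & HC & HCbits & HC_in).
  - exact Hy.
  - exact Hyj.
  - split; lra.
  - exact (slot_bits_pos_pbar _ _ _ _ Hadm Hphi0).
  - lia.
  - lra.
  - destruct (prepend_later_slots j0 jf s t C) as [s' [Hs' Hbits]];
      [exact Hadm | exact Ht2 | exact HC | |].
    + intros u Hu. destruct (HC_in u Hu) as (H1 & H2 & Hprec).
      split; [exact H1 | split; [lra | intros z Hz Hzt]].
      apply Hprec, (StronglySorted_precedes Rt (window Rt (theta j0) (theta jf) s));
        [apply ordered_iff_StronglySorted, (admissible_filter _ _ _ _ _ Hadm)
        | exact Hyw | exact Hz |].
      destruct Hy as [[_ Hy_slot] _]. rewrite Hyj in Hy_slot. lra.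
    + exists s'. split; [exact Hs'|]. rewrite Hbits. lia.
Qed.

Lemma capacity_upper_bound j0 jf s t s1 :
  (j0 < jf)%nat -> admissible theta Rt pbar s ->
  (forall s', admissible theta Rt pbar s' ->
     (bits (window Rt (theta j0) (theta jf) s')
      <= bits (window Rt (theta j0) (theta jf) s))%nat) ->
  bits (window Rt (theta j0) (theta jf) s)
  = sum_range (slot_bits Rt (theta j0) (theta jf) s) j0 jf ->
  theta j0 <= t < theta (S j0) -> admissible theta Rt pbar s1 ->
  (bits (window Rt t (theta jf) s1)
   <= Z.to_nat (residual j0 (slot_bits Rt (theta j0) (theta jf) s j0) t) + 1
      + sum_range (slot_bits Rt (theta j0) (theta jf) s) (S j0) jf)%nat.
Proof.
  intros Hj Hadm Hopt Hbits [Ht1 Ht2] Hs1.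
  rewrite sum_range_first in Hbits by exact Hj.
  set (phi0 := slot_bits Rt (theta j0) (theta jf) s j0) in *.
  set (F := residual j0 phi0 t).
  set (w1 := window Rt t (theta jf) s1).
  set (k := (phi0 - S (Z.to_nat F))%nat).
  enough (Hk : (k + bits w1 <= bits (window Rt (theta j0) (theta jf) s))%nat) by lia.
  destruct (Nat.eq_dec k 0) as [->|Hk0].
  { eapply Nat.le_trans; [apply window_bits_antimono, Ht1 | apply Hopt, Hs1]. }
  pose proof (rate_pos j0) as Hr.
  assert (Hk_lt : INR k / Rt j0 < t - theta j0).
  { apply Rdiv_lt_of_lt_mul; [exact Hr|].
    destruct (base_Int_part (INR phi0 - Rt j0 * (t - theta j0))) as [_ HF].
    pose proof (IZR_le_INR_Z_to_nat F).
    unfold k. rewrite minus_INR, S_INR by lia. unfold F, residual in *. lra. }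
  assert (Hpbar : (0 < pbar j0)%nat).
  { apply (slot_bits_pos_pbar (theta j0) (theta jf) s j0 Hadm). fold phi0. lia. }
  set (C := train j0 (t - INR k / Rt j0) k).
  assert (HC : forall u, In u C -> theta j0 < tx_t u /\ tx_t u < t /\ tx_end Rt u <= t).
  { intros u Hu. destruct (In_train _ _ _ _ Hu) as (_ & _ & H1 & H2 & H3). repeat split; lra. }
  assert (Hw1 : forall v, In v w1 -> t <= tx_t v /\ tx_end Rt v <= theta jf).
  { intros v Hv. apply filter_In in Hv as [_ Hv]. apply in_windowb_iff, Hv. }
  assert (Hadm' : admissible theta Rt pbar (C ++ w1)).
  { apply admissible_app.
    - apply train_admissible; [exact Hpbar | lra | lra].
    - apply admissible_filter, Hs1.
    - intros u v Hu Hv. destruct (HC u Hu) as (_ & H2 & H3). destruct (Hw1 v Hv). split; lra. }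
  pose proof (Hopt _ Hadm') as Hbound.
  rewrite window_id, bits_app in Hbound.
  - unfold C in Hbound. rewrite bits_train in Hbound. exact Hbound.
  - intros u Hu. apply in_app_or in Hu as [Hu|Hu].
    + destruct (HC u Hu) as (H1 & _ & H3). pose proof (theta_le _ _ Hj). split; lra.
    + destruct (Hw1 u Hu). split; lra.
Qed.

End Schedules.

Lemma INR_sub_bounds a b c : (b <= a <= b + c)%nat -> 0 <= INR a - INR b <= INR c.
Proof.
  intros [Hba Hab]. apply le_INR in Hba. apply le_INR in Hab. rewrite plus_INR in Hab. lra.
Qed.

Lemma D_hat_as_nat theta Rt n j0 jf phi t :
  D_hat theta Rt n j0 jf phi t
  = INR (n * (Z.to_nat (residual theta Rt j0 (phi j0) t) + sum_range phi (S j0) jf)).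
Proof.
  unfold D_hat, residual. set (F := Int_part _).
  rewrite mult_INR, plus_INR, Rmult_plus_distr_l. f_equal.
  pose proof (pos_INR n).
  destruct (Z_le_gt_dec 0 F) as [HF|HF].
  - rewrite INR_Z_to_nat by exact HF. apply Rmax_right, Rmult_le_pos; [lra | apply IZR_le, HF].
  - replace (Z.to_nat F) with 0%nat by lia. rewrite Rmult_0_r. apply Rmax_left.
    assert (IZR F <= 0) by (apply IZR_le; lia).
    rewrite <- (Rmult_0_r (INR n)). apply Rmult_le_compat_l; lra.
Qed.

Theorem proposition2
  (theta Rt : nat -> R) (pbar : nat -> nat) (n : nat)
  (Htheta : forall j, theta j < theta (S j))
  (HR : forall j, 0 < Rt j)
  (Hn : (0 < n)%nat)
  (j0 jf : nat) (Hj : (j0 < jf)%nat)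
  (phi : nat -> nat)
  (Hphi : optimal_slot_allocation theta Rt pbar n j0 jf phi)
  (t : R) (Ht : theta j0 <= t < theta (S j0)) :
  (exists D, is_data_capacity theta Rt pbar n t (theta jf) D) /\
  (forall D, is_data_capacity theta Rt pbar n t (theta jf) D ->
     0 <= INR D - D_hat theta Rt n j0 jf phi t /\
     INR D - D_hat theta Rt n j0 jf phi t <= INR n).
Proof.
  destruct Hphi as (s & Hadm & Hcap & Hbits & Hslot & _).
  assert (Hphi_slot : forall a, (j0 <= a)%nat ->
            sum_range phi a jf = sum_range (slot_bits Rt (theta j0) (theta jf) s) a jf).
  { intros a Ha. apply sum_range_ext. intros j Hja. apply Hslot. lia. }
  assert (Hopt : forall s', admissible theta Rt pbar s' ->
            (bits (window Rt (theta j0) (theta jf) s')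
             <= bits (window Rt (theta j0) (theta jf) s))%nat).
  { intros s' Hs'. apply (Nat.mul_le_mono_pos_l _ _ n Hn), (proj2 Hcap), Hs'. }
  split.
  - apply (capacity_exists _ _ _ _ _ _ (bits (window Rt (theta j0) (theta jf) s))).
    intros s' Hs'. eapply Nat.le_trans; [apply window_bits_antimono, Ht | apply Hopt, Hs'].
  - intros D [[s1 [Hs1 ->]] HD].
    rewrite D_hat_as_nat, Hslot, Hphi_slot by lia.
    destruct (capacity_lower_witness theta Rt pbar Htheta HR j0 jf s t Hj Hadm Ht)
      as [s' [Hs' Hlower]].
    pose proof (HD s' Hs') as Hs'_le.
    pose proof (capacity_upper_bound theta Rt pbar Htheta HR j0 jf s t s1 Hj Hadm Hopt
                  ltac:(rewrite Hbits; apply Hphi_slot; lia) Ht Hs1) as Hupper.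
    apply INR_sub_bounds. nia.
Qed.
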